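(* Let $n\ge 1$, $\mathbf a\in\mathbb{R}^n$, and write $P=P(\mathbf a)$, $N=N(\mathbf a)$, $Z=Z(\mathbf a)$. Then $$P(J_{n,1}\mathbf a)\ge \frac{P(P+1)}{2}+PZ,\quad N(J_{n,1}\mathbf a)\ge \frac{N(N+1)}{2}+NZ,\quad Z(J_{n,1}\mathbf a)\le \frac{Z(Z+1)}{2}+PN,$$ and all three are equalities when $PN=0$.
   Context: For $\mathbf x\in\mathbb{R}^m$, $P(\mathbf x)$, $N(\mathbf x)$, $Z(\mathbf x)$ denote the numbers of positive, negative and zero components of $\mathbf x$. $J_{n,1}$ is the matrix, with respect to the left lexicographic monomial bases $(x_1,\dots,x_n)$ of degree 1 and $(x_1^2,x_1x_2,\dots,x_n^2)$ of degree 2, of the map $A(x)\mapsto A(x)(x_1+\cdots+x_n)$; thus $J_{n,1}\mathbf a$ is the coefficient vector of $(a_1x_1+\cdots+a_nx_n)(x_1+\cdots+x_n)$. *)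

From HB Require Import structures.
From mathcomp Require Import all_boot all_order all_algebra.
Set Implicit Arguments. Unset Strict Implicit. Unset Printing Implicit Defensive.
Import Order.TTheory GRing.Theory Num.Theory.
Local Open Scope ring_scope.

Definition Pc (R : realFieldType) (m : nat) (x : 'rV[R]_m) : nat :=
  #|[set i : 'I_m | 0 < x ord0 i]|.
Definition Nc (R : realFieldType) (m : nat) (x : 'rV[R]_m) : nat :=
  #|[set i : 'I_m | x ord0 i < 0]|.
Definition Zc (R : realFieldType) (m : nat) (x : 'rV[R]_m) : nat :=
  #|[set i : 'I_m | x ord0 i == 0]|.

(* Degree-2 monomials x_i x_j in n variables, encoded as pairs (i,j), i <= j.
   The finType enumeration of a subtype of 'I_n * 'I_n is lexicographic,
   i.e. the left lexicographic order x_1^2, x_1x_2, ..., x_n^2. *)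
Definition mono2 (n : nat) := {p : 'I_n * 'I_n | (p.1 <= p.2)%N}.

(* Coefficient of x_i x_j (i <= j) in (a_1x_1+...+a_nx_n)(x_1+...+x_n):
   a_i if i = j, a_i + a_j if i < j. *)
Definition coef2 (R : realFieldType) (n : nat) (a : 'rV[R]_n) (p : 'I_n * 'I_n) : R :=
  if p.1 == p.2 then a ord0 p.1 else a ord0 p.1 + a ord0 p.2.

Definition J1 (R : realFieldType) (n : nat) (a : 'rV[R]_n) : 'rV[R]_(#|{: mono2 n}|) :=
  \row_(k < #|{: mono2 n}|) coef2 a (val (enum_val k)).

From HB Require Import structures.
From mathcomp Require Import all_boot all_order all_algebra.
From mathcomp Require Import zify ring.
Import Order.TTheory GRing.Theory Num.Theory.

(* Counting the monomials twice, once as (i, j) and once as (j, i), turns a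
   count over them into a sum over all ordered pairs plus the diagonal.  A sum
   a_i + a_j is positive when both terms are positive or one is positive and
   the other zero, and vanishes when both vanish; hence
   2 P(J a) >= P^2 + 2 P Z + P and 2 Z(J a) >= Z^2 + Z, and the bound for N is
   the one for P applied to -a.  Since P(J a) + N(J a) + Z(J a) = n(n+1)/2 with
   n = P + N + Z, the only slack left is the P N mixed pairs, which gives the
   upper bound on Z(J a) and, when P N = 0, the equalities. *)

Lemma card_set_sum (T : finType) (Q : pred T) : #|[set x | Q x]| = \sum_x Q x.
Proof.
rewrite -sum1dep_card big_mkcond /=.
by apply: eq_bigr => x _; case: (Q x).
Qed.

Lemma sum_pair_mul (I J : finType) (f : I -> nat) (g : J -> nat) :
  \sum_(q : I * J) f q.1 * g q.2 = (\sum_i f i) * (\sum_j g j).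
Proof.
rewrite -(pair_bigA _ (fun i j => f i * g j)) big_distrl /=.
by apply: eq_bigr => i _; rewrite big_distrr.
Qed.

Section OrderedPairs.
Variable n : nat.
Implicit Type G : 'I_n * 'I_n -> nat.

Lemma sum_mono2 G : \sum_(p : mono2 n) G (val p) = \sum_(q : 'I_n * 'I_n | q.1 <= q.2) G q.
Proof. by rewrite (big_sub [pred q : 'I_n * 'I_n | q.1 <= q.2]). Qed.

Lemma double_sum_leq_pairs G : (forall i j, G (i, j) = G (j, i)) ->
  2 * \sum_(q : 'I_n * 'I_n | q.1 <= q.2) G q = \sum_q G q + \sum_i G (i, i).
Proof.
move=> G_sym.
have sum_swap : \sum_(q : 'I_n * 'I_n | q.1 <= q.2) G q = \sum_(q : 'I_n * 'I_n | q.2 <= q.1) G q.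
  have swap_inj : injective (fun q : 'I_n * 'I_n => (q.2, q.1)).
    by move=> [i j] [k l] [-> ->].
  rewrite (reindex_inj swap_inj) /=.
  by apply: eq_bigr => -[i j] _; rewrite G_sym.
have diag : \sum_(q : 'I_n * 'I_n | q.1 == q.2) G q = \sum_i G (i, i).
  transitivity (\sum_i \sum_(j | j == i) G (i, j)).
    by rewrite pair_big_dep; apply: eq_big => -[i j] //=; rewrite eq_sym.
  by apply: eq_bigr => i _; rewrite big_pred1_eq.
have split_swap : \sum_(q : 'I_n * 'I_n | q.2 <= q.1) G q =
    \sum_(q : 'I_n * 'I_n | ~~ (q.1 <= q.2)) G q + \sum_(q : 'I_n * 'I_n | q.1 == q.2) G q.
  rewrite (bigID (fun q : 'I_n * 'I_n => ~~ (q.1 <= q.2))) /=.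
  congr (_ + _); apply: eq_bigl => -[i j] /=.
  - by case: ltngtP.
  - by rewrite negbK andbC -eqn_leq.
rewrite mul2n -addnn {2}sum_swap split_swap diag addnA.
by rewrite [in RHS](bigID (fun q : 'I_n * 'I_n => q.1 <= q.2)).
Qed.

Lemma card_mono2 : 2 * #|{: mono2 n}| = n * (n + 1).
Proof.
rewrite card_sig -sum1_card double_sum_leq_pairs // !sum1_card card_prod card_ord.
by rewrite mulnDr muln1.
Qed.

End OrderedPairs.

Section SignCounts.
Variable R : realFieldType.

Lemma Pc_sum (m : nat) (x : 'rV[R]_m) : Pc x = \sum_i (0 < x ord0 i)%R.
Proof. exact: card_set_sum. Qed.

Lemma Zc_sum (m : nat) (x : 'rV[R]_m) : Zc x = \sum_i (x ord0 i == 0)%R.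
Proof. exact: card_set_sum. Qed.

Lemma Pc_opp (m : nat) (x : 'rV[R]_m) : Pc (- x)%R = Nc x.
Proof. by apply: eq_card => i; rewrite !inE mxE oppr_gt0. Qed.

Lemma Zc_opp (m : nat) (x : 'rV[R]_m) : Zc (- x)%R = Zc x.
Proof. by apply: eq_card => i; rewrite !inE mxE oppr_eq0. Qed.

Lemma sign_counts_sum (m : nat) (x : 'rV[R]_m) : Pc x + Nc x + Zc x = m.
Proof.
rewrite /Pc /Nc /Zc !card_set_sum -!big_split /= -[RHS]card_ord -sum1_card.
by apply: eq_bigr => i _; case: ltrgtP.
Qed.

End SignCounts.

Section J1Counts.
Variables (R : realFieldType) (n : nat) (a : 'rV[R]_n).

Lemma coef2_sym (i j : 'I_n) : coef2 a (i, j) = coef2 a (j, i).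
Proof. by rewrite /coef2 /= eq_sym; case: eqP => [->|_] //; rewrite addrC. Qed.

Lemma coef2_diag (i : 'I_n) : coef2 a (i, i) = a ord0 i.
Proof. by rewrite /coef2 eqxx. Qed.

Lemma J1_opp : J1 (- a)%R = (- J1 a)%R.
Proof. by apply/rowP => k; rewrite !mxE /coef2; case: ifP; rewrite !mxE ?opprD. Qed.

Lemma double_count_J1 (Q : pred R) :
  2 * #|[set k | Q (J1 a ord0 k)]| = \sum_q Q (coef2 a q) + \sum_i Q (a ord0 i).
Proof.
rewrite card_set_sum; under eq_bigr do rewrite mxE.
rewrite -(big_enum_val (fun p : mono2 n => nat_of_bool (Q (coef2 a (val p))))) /=.
rewrite (@sum_mono2 n (fun q => nat_of_bool (Q (coef2 a q)))) double_sum_leq_pairs.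
  by under [X in _ + X]eq_bigr do rewrite coef2_diag.
by move=> i j; rewrite coef2_sym.
Qed.

Local Notation pos x := (0 < x)%R.
Local Notation null x := (x == 0)%R.

Lemma coef2_gt0_lower (q : 'I_n * 'I_n) :
  pos (a ord0 q.1) * pos (a ord0 q.2) + pos (a ord0 q.1) * null (a ord0 q.2)
  + null (a ord0 q.1) * pos (a ord0 q.2) <= pos (coef2 a q).
Proof.
case: q => i j; rewrite /coef2 /=.
have [<-|_] := eqVneq i j; first by case: (ltrgtP (a ord0 i) 0).
case: (ltrgtP (a ord0 i) 0) => ai; case: (ltrgtP (a ord0 j) 0) => aj //=.
- by rewrite (addr_gt0 ai aj).
- by rewrite aj addr0 ai.
- by rewrite ai add0r aj.
Qed.

Lemma coef2_eq0_lower (q : 'I_n * 'I_n) :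
  null (a ord0 q.1) * null (a ord0 q.2) <= null (coef2 a q).
Proof.
case: q => i j; rewrite /coef2 /=.
have [<-|_] := eqVneq i j; first by case: (a ord0 i == 0)%R.
by case: eqP => [->|_]; case: eqP => [->|_] //=; rewrite addr0 eqxx.
Qed.

Lemma Pc_J1_lower : Pc a * (Pc a + 1) + 2 * (Pc a * Zc a) <= 2 * Pc (J1 a).
Proof.
rewrite [Pc (J1 a)]/Pc (double_count_J1 (fun r => 0 < r)%R) -Pc_sum.
have -> : Pc a * (Pc a + 1) + 2 * (Pc a * Zc a) =
           Pc a * Pc a + Pc a * Zc a + Zc a * Pc a + Pc a by ring.
rewrite leq_add2r Pc_sum Zc_sum -!sum_pair_mul -!big_split /=.
by apply: leq_sum => q _; apply: coef2_gt0_lower.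
Qed.

Lemma Zc_J1_lower : Zc a * (Zc a + 1) <= 2 * Zc (J1 a).
Proof.
rewrite [Zc (J1 a)]/Zc (double_count_J1 (fun r => r == 0)%R) -Zc_sum.
rewrite mulnDr muln1 leq_add2r Zc_sum -sum_pair_mul.
by apply: leq_sum => q _; apply: coef2_eq0_lower.
Qed.

End J1Counts.

Lemma Nc_J1_lower (R : realFieldType) (n : nat) (a : 'rV[R]_n) :
  Nc a * (Nc a + 1) + 2 * (Nc a * Zc a) <= 2 * Nc (J1 a).
Proof. by rewrite -!Pc_opp -J1_opp -(Zc_opp _ _ a); apply: Pc_J1_lower. Qed.

Lemma J1_sign_counts (R : realFieldType) (n : nat) (a : 'rV[R]_n) :
  2 * (Pc (J1 a) + Nc (J1 a) + Zc (J1 a)) =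
  (Pc a + Nc a + Zc a) * (Pc a + Nc a + Zc a + 1).
Proof. by rewrite !sign_counts_sum card_mono2. Qed.

Lemma triangular_count_bounds (P N Z p q z : nat) :
  P * (P + 1) + 2 * (P * Z) <= 2 * p -> N * (N + 1) + 2 * (N * Z) <= 2 * q ->
  Z * (Z + 1) <= 2 * z -> 2 * (p + q + z) = (P + N + Z) * (P + N + Z + 1) ->
  [/\ P * (P + 1) %/ 2 + P * Z <= p, N * (N + 1) %/ 2 + N * Z <= q,
      z <= Z * (Z + 1) %/ 2 + P * N &
      P * N = 0 -> [/\ p = P * (P + 1) %/ 2 + P * Z, q = N * (N + 1) %/ 2 + N * Z &
                       z = Z * (Z + 1) %/ 2 + P * N]].
Proof.
by move=> *; split; [lia | lia | lia | move=> ?; split; lia].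
Qed.

Theorem lemma3p1 (R : realFieldType) (n : nat) (a : 'rV[R]_n) :
  (0 < n)%N ->
  let P := Pc a in let N := Nc a in let Z := Zc a in
  [/\ (P * (P + 1) %/ 2 + P * Z <= Pc (J1 a))%N,
      (N * (N + 1) %/ 2 + N * Z <= Nc (J1 a))%N,
      (Zc (J1 a) <= Z * (Z + 1) %/ 2 + P * N)%N &
      (P * N = 0)%N ->
        [/\ Pc (J1 a) = (P * (P + 1) %/ 2 + P * Z)%N,
            Nc (J1 a) = (N * (N + 1) %/ 2 + N * Z)%N &
            Zc (J1 a) = (Z * (Z + 1) %/ 2 + P * N)%N]].
Proof.
move=> _; apply: triangular_count_bounds.
- exact: Pc_J1_lower.
- exact: Nc_J1_lower.
- exact: Zc_J1_lower.
- exact: J1_sign_counts.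
Qed.
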